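(* Let $\mathcal{G}=(\mathcal{V},\mathcal{E})$ be an endotactic reaction network. Then there exists a source-only reaction network $\tilde{\mathcal{G}}=(\tilde{\mathcal{V}},\tilde{\mathcal{E}})$ such that $\mathcal{G}\sqsubseteq\tilde{\mathcal{G}}$ and the nodes of $\tilde{\mathcal{G}}$ are exactly the source nodes of $\mathcal{G}$. Therefore, every endotactic network is effectively source-only.
   Context: A reaction network (E-graph) $\mathcal{G}=(\mathcal{V},\mathcal{E})$ is a finite directed graph whose nodes are distinct elements of a finite set $Y\subset\mathbb{R}^d_{\ge 0}$, with $\mathcal{V}\neq\emptyset$, every node incident to at least one edge, and no edge from a node to itself. For an edge $e$, $\mathbf{s}(e)$ is its source node, $\mathbf{t}(e)$ its target, $\mathbf{v}(e)=\mathbf{t}(e)-\mathbf{s}(e)$. Given positive rate constants $\mathcal{K}=(k_e)$, $\mathcal{G}$ generates the system $\frac{d\mathbf{x}}{dt}=\mathbf{f}_{\mathcal{G}(\mathcal{K})}(\mathbf{x})=\sum_{e}k_e\mathbf{x}^{\mathbf{s}(e)}\mathbf{v}(e)$ ($\mathbf{x}^{\mathbf{y}}=\prod_i x_i^{y_i}$, $0^0=1$). $\mathcal{G}\sqsubseteq\tilde{\mathcal{G}}$ means: for every positive rate constants $\mathcal{K}$ for $\mathcal{G}$ there exist positive rate constants $\tilde{\mathcal{K}}$ for $\tilde{\mathcal{G}}$ with $\mathbf{f}_{\tilde{\mathcal{G}}(\tilde{\mathcal{K}})}=\mathbf{f}_{\mathcal{G}(\mathcal{K})}$ identically. $\mathcal{G}$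 is endotactic if for every $\mathbf{w}\in\mathbb{R}^d$ and $e_i\in\mathcal{E}$ with $\mathbf{w}\cdot\mathbf{v}(e_i)<0$ there exists $e_j\in\mathcal{E}$ with $\mathbf{w}\cdot(\mathbf{s}(e_j)-\mathbf{s}(e_i))<0$ and $\mathbf{w}\cdot\mathbf{v}(e_j)>0$. A network is source-only if every node that is the target of some edge is also the source of some edge. A polynomial dynamical system is source-only if it is generated (for some positive rate constants) by some source-only network; a network is effectively source-only if every system it generates is source-only. *)

From HB Require Import structures.
From mathcomp Require Import all_boot all_order all_algebra.
From mathcomp Require Import reals exp.
Set Implicit Arguments. Unset Strict Implicit. Unset Printing Implicit Defensive.
Import Order.TTheory GRing.Theory Num.Theory.
Local Open Scope ring_scope.

Section RN.
Variables (R : realType) (d : nat).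

Definition vec := 'rV[R]_d.
Definition edge := (vec * vec)%type.
Definition network := seq edge.

Definition src (e : edge) : vec := e.1.
Definition tgt (e : edge) : vec := e.2.
Definition reactv (e : edge) : vec := tgt e - src e.

Definition dotv (w v : vec) : R := \sum_(i < d) w 0 i * v 0 i.

Definition nonneg_vec (y : vec) : Prop := forall i : 'I_d, 0 <= y 0 i.

(* A reaction network (E-graph): finite edge list without duplicates, with
   nodes in R^d_{>=0}, no self loops, and nonempty (V nonempty and every node
   lies on an edge, nodes being exactly the endpoints of edges). *)
Definition is_network (G : network) : Prop :=
  [/\ uniq G, G <> [::],
      (forall e, e \in G -> src e != tgt e) &
      (forall e, e \in G -> nonneg_vec (src e) /\ nonneg_vec (tgt e))].

Definition nodes (G : network) : seq vec := map src G ++ map tgt G.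
Definition sources (G : network) : seq vec := map src G.

(* x^y = prod_i x_i^{y_i}, with powR satisfying 0^0 = 1 *)
Definition monom (x y : vec) : R := \prod_(i < d) powR (x 0 i) (y 0 i).

Definition rates_pos (G : network) (k : edge -> R) : Prop :=
  forall e, e \in G -> 0 < k e.

Definition field (G : network) (k : edge -> R) (x : vec) : vec :=
  \sum_(e <- G) (k e * monom x (src e)) *: reactv e.

Definition same_system (F1 F2 : vec -> vec) : Prop :=
  forall x, nonneg_vec x -> F1 x = F2 x.

Definition realized_by (G G' : network) : Prop :=
  forall k, rates_pos G k ->
    exists k', rates_pos G' k' /\ same_system (field G' k') (field G k).

Definition endotactic (G : network) : Prop :=
  forall (w : vec) (ei : edge), ei \in G -> dotv w (reactv ei) < 0 ->
    exists2 ej, ej \in G &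
      dotv w (src ej - src ei) < 0 /\ 0 < dotv w (reactv ej).

Definition source_only (G : network) : Prop :=
  forall e, e \in G -> exists2 e', e' \in G & src e' = tgt e.

Definition source_only_system (F : vec -> vec) : Prop :=
  exists G' k', [/\ is_network G', source_only G', rates_pos G' k' &
                   same_system (field G' k') F].

Definition effectively_source_only (G : network) : Prop :=
  forall k, rates_pos G k -> source_only_system (field G k).

End RN.

From HB Require Import structures.
From mathcomp Require Import all_boot all_order all_algebra.
From mathcomp Require Import reals exp.
From mathcomp Require Import ring.
From Stdlib Require Import ClassicalEpsilon.
Set Implicit Arguments. Unset Strict Implicit. Unset Printing Implicit Defensive.
Import Order.TTheory GRing.Theory Num.Theory.
Local Open Scope ring_scope.

(* By Farkas' lemma every reaction vector t(e) - s(e) of an endotactic network is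
   a nonnegative combination of the vectors y - s(e), y ranging over the source
   nodes: a separating w with w.(y - s(e)) >= 0 for all sources y and
   w.(t(e) - s(e)) < 0 would leave no source strictly w-below s(e), contradicting
   endotacticity.  Regrouping sum_e k_e x^s(e) sum_y lam_e(y) (y - s(e)) by the
   pairs (s(e), y) shows that the network with edges s -> y and rates
   sum_(s(e) = s) k_e lam_e(y) generates the same system; its nodes are sources
   of the original network, and each source has an outgoing edge because
   t(e) - s(e) <> 0. *)

Section Farkas.
Variables (R : realType) (d : nat).
Implicit Types (u v w : vec R d).

Lemma dotvC u v : dotv u v = dotv v u.
Proof. by apply: eq_bigr => i _; rewrite mulrC. Qed.

Lemma dotv_is_linear w : linear_for *%R (dotv w).
Proof.
move=> a u v; rewrite /dotv mulr_sumr -big_split.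
by apply: eq_bigr => i _; rewrite !mxE mulrDr mulrCA.
Qed.

HB.instance Definition _ w :=
  GRing.isLinear.Build R (vec R d) R *%R (dotv w) (dotv_is_linear w).

Lemma dotvNv_lt0 v : v != 0 -> dotv (- v) v < 0.
Proof.
move=> v_neq0; rewrite dotvC raddfN oppr_lt0 lt_def /dotv.
rewrite sumr_ge0 ?andbT => [|i _]; last exact: sqr_ge0.
rewrite psumr_eq0 => [|i _]; last exact: sqr_ge0.
apply: contra v_neq0 => /allP v0; apply/eqP/rowP => j.
by have := v0 j (mem_index_enum j); rewrite mulf_eq0 orbb mxE => /eqP.
Qed.

Lemma farkas_alternative m (a : nat -> vec R d) (b : vec R d) :
  (exists2 l : nat -> R, forall i, 0 <= l i & b = \sum_(i < m) l i *: a i) \/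
  (exists2 w, forall i, (i < m)%N -> 0 <= dotv w (a i) & dotv w b < 0).
Proof.
elim: m a b => [|m IH] a b.
  have [->|b_neq0] := eqVneq b 0; last by right; exists (- b); last exact: dotvNv_lt0.
  by left; exists (fun=> 0) => //; rewrite big_ord0.
have [[l l_ge0 ->]|[w wa_ge0 wb_lt0]] := IH a b.
  left; exists (fun i => if (i < m)%N then l i else 0) => [i|]; first by case: ifP.
  by rewrite big_ord_recr /= ltnn scale0r addr0; apply: eq_bigr => i _; rewrite ltn_ord.
have [wam_ge0|wam_lt0] := leP 0 (dotv w (a m)).
  by right; exists w => // i; rewrite ltnS leq_eqVlt => /predU1P[->|/wa_ge0].
set alpha := dotv w (a m) in wam_lt0.
(* Project along [a m] onto the hyperplane [dotv w _ = 0] and recurse. *)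
pose proj v := v - (dotv w v / alpha) *: a m.
have [[l l_ge0 projb]|[w' w'a_ge0 w'b_lt0]] := IH (proj \o a) (proj b).
  pose v := \sum_(i < m) l i *: a i.
  have proj_v : proj v = \sum_(i < m) l i *: proj (a i).
    rewrite /proj linear_sum mulr_suml scaler_suml -sumrB.
    by apply: eq_bigr => i _; rewrite linearZ_LR scalerBr scalerA mulrA.
  pose c := (dotv w b - dotv w v) / alpha.
  left; exists (fun i => if (i < m)%N then l i else c) => [i|].
    case: ifP => // _; rewrite ler_ndivlMr // mul0r subr_le0.
    rewrite (le_trans (ltW wb_lt0)) // linear_sum sumr_ge0 // => j _.
    by rewrite linearZ_LR mulr_ge0 // wa_ge0.
  rewrite big_ord_recr /= ltnn; under eq_bigr do rewrite ltn_ord.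
  move/eqP: projb; rewrite -proj_v /proj subr_eq => /eqP->.
  by rewrite /c mulrBl scalerBl addrAC addrA.
pose w'' := w' - (dotv w' (a m) / alpha) *: w.
have dot_proj v : dotv w'' v = dotv w' (proj v).
  by rewrite /w'' /proj dotvC !raddfB /= !linearZ_LR /= !(dotvC v); ring.
right; exists w''; last by rewrite dot_proj.
move=> i; rewrite ltnS leq_eqVlt => /predU1P[->|/w'a_ge0]; last by rewrite dot_proj.
by rewrite dot_proj /proj -/alpha divff ?lt_eqF // scale1r subrr raddf0.
Qed.

End Farkas.

Section ConeDecomposition.
Variables (R : realType) (d : nat) (G : network R d).
Local Notation S := (undup (sources G)).

(* [lam (src e) = 0] is what keeps the refined network free of self-loops. *)
Definition cone_coefficients (e : edge R d) (lam : vec R d -> R) : Prop :=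
  [/\ forall y, 0 <= lam y, lam (src e) = 0 &
      reactv e = \sum_(y <- S) lam y *: (y - src e)].

Lemma endotactic_reactv_cone e : endotactic G -> e \in G ->
  exists lam, cone_coefficients e lam.
Proof.
move=> endo eG.
have [[l l_ge0 re]|[w wS_ge0 we_lt0]] :=
  farkas_alternative (size S) (fun i => nth 0 S i - src e) (reactv e); last first.
  have [e' e'G [w_lt0 _]] := endo w e eG we_lt0.
  have /(nthP 0)[i iS Si] : src e' \in S by rewrite mem_undup map_f.
  by have := wS_ge0 i iS; rewrite Si leNgt w_lt0.
exists (fun y => if y == src e then 0 else l (index y S)); split.
- by move=> y; case: eqP.
- by rewrite eqxx.
- rewrite re [RHS](big_nth 0) big_mkord; apply: eq_bigr => i _.
  case: eqP => [->|_]; first by rewrite subrr !scaler0.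
  by rewrite index_uniq ?undup_uniq.
Qed.

Lemma endotactic_cone_coefficients : endotactic G ->
  exists lam, forall e, e \in G -> cone_coefficients e (lam e).
Proof.
move=> endo; apply: (choice (fun e lam => e \in G -> cone_coefficients e lam)) => e.
have [eG|_] := boolP (e \in G); last by exists (fun=> 0).
by have [lam ?] := endotactic_reactv_cone endo eG; exists lam.
Qed.

End ConeDecomposition.

Section Refinement.
Variables (R : realType) (d : nat) (G : network R d).
Variable lam : edge R d -> vec R d -> R.
Hypothesis lamP : forall e, e \in G -> cone_coefficients G e (lam e).
Local Notation S := (undup (sources G)).

Definition contributes (p e : edge R d) : bool :=
  (src e == src p) && (0 < lam e (tgt p)).

Definition refined_network : network R d :=
  [seq p <- [seq (s, y) | s <- S, y <- S] | has (contributes p) G].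

Definition refined_rates (k : edge R d -> R) (p : edge R d) : R :=
  \sum_(e <- G | src p == src e) k e * lam e (tgt p).

Let lam_ge0 e y : e \in G -> 0 <= lam e y.
Proof. by case/lamP. Qed.

Let lam_eq0 e y : e \in G -> ~~ (0 < lam e y) -> lam e y = 0.
Proof. by move=> eG; rewrite lt_def lam_ge0 // andbT negbK => /eqP. Qed.

Lemma src_in_sources e : e \in G -> src e \in S.
Proof. by move=> eG; rewrite mem_undup map_f. Qed.

Lemma mem_refined_network p :
  (p \in refined_network) = (tgt p \in S) && has (contributes p) G.
Proof.
rewrite mem_filter andbC.
have [/hasP[e eG /andP[/eqP es _]]|_] := boolP (has _ _); rewrite ?andbT ?andbF //.
case: p es => s y /= <-; apply/allpairsP/idP => [[[s' y'] [_ ? [_ ->]]] //|yS].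
by exists (src e, y); rewrite /= src_in_sources.
Qed.

Lemma refined_edge e y :
  e \in G -> y \in S -> 0 < lam e y -> (src e, y) \in refined_network.
Proof.
move=> eG yS lam_gt0; rewrite mem_refined_network yS.
by apply/hasP; exists e; rewrite // /contributes eqxx.
Qed.

Lemma refined_rates_gt0 k p :
  rates_pos G k -> (0 < refined_rates k p) = has (contributes p) G.
Proof.
move=> k_gt0; have term_ge0 e : (e \in G) && (src p == src e) -> 0 <= k e * lam e (tgt p).
  by case/andP=> eG _; apply: mulr_ge0; [exact/ltW/k_gt0 | exact: lam_ge0].
rewrite /refined_rates big_seq_cond lt_def psumr_neq0 // sumr_ge0 // andbT.
apply: eq_in_has => e eG /=; rewrite eG eq_sym /contributes.
by case: eqP => //= _; rewrite pmulr_rgt0 ?k_gt0.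
Qed.

Lemma refined_rates_eq0 k p : ~~ has (contributes p) G -> refined_rates k p = 0.
Proof.
move=> /hasPn nc; rewrite /refined_rates big_seq_cond big1 // => e /andP[eG sp].
by rewrite lam_eq0 ?mulr0 //; have := nc e eG; rewrite /contributes eq_sym sp.
Qed.

Lemma field_refined_network k x :
  field refined_network (refined_rates k) x = field G k x.
Proof.
transitivity (\sum_(p <- [seq (s, y) | s <- S, y <- S])
                (refined_rates k p * monom x (src p)) *: reactv p).
  rewrite /field big_filter big_mkcond; apply: eq_bigr => p _.
  by case: ifPn => // /refined_rates_eq0->; rewrite mul0r scale0r.
rewrite big_allpairs.
transitivity (\sum_(s <- S) \sum_(y <- S) \sum_(e <- G | s == src e)
                (k e * lam e y * monom x (src e)) *: (y - src e)).
  apply: eq_bigr => s _; apply: eq_bigr => y _.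
  by rewrite /refined_rates mulr_suml scaler_suml; apply: eq_bigr => e /eqP <-.
under eq_bigr do rewrite exchange_big.
rewrite (exchange_big_dep predT) //= big_seq_cond [RHS]big_seq_cond.
apply: eq_bigr => e /andP[eG _].
rewrite -big_filter (filter_pred1_uniq (undup_uniq _) (src_in_sources eG)) big_seq1.
have [_ _ ->] := lamP eG; rewrite scaler_sumr; apply: eq_bigr => y _.
by rewrite scalerA mulrAC.
Qed.

Lemma realized_by_refined_network : realized_by G refined_network.
Proof.
move=> k k_gt0; exists (refined_rates k); split=> [p|x _].
  by rewrite mem_refined_network refined_rates_gt0 // => /andP[].
exact: field_refined_network.
Qed.

Hypothesis G_network : is_network G.

Lemma exists_pos_coefficient e : e \in G -> exists2 y, y \in S & 0 < lam e y.
Proof.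
case: G_network => _ _ no_loop _ eG; apply/hasP; move: (no_loop e eG).
apply: contraTT => /hasPn lam_le0; rewrite negbK eq_sym -subr_eq0 -/(reactv e).
have [_ _ ->] := lamP eG; rewrite big1_seq // => y /andP[_ yS].
by rewrite lam_eq0 ?lam_le0 ?scale0r.
Qed.

Lemma refined_is_network : is_network refined_network.
Proof.
case: G_network => _ G_neq0 _ G_nonneg.
have sources_nonneg y : y \in S -> nonneg_vec y.
  by rewrite mem_undup => /mapP[e eG ->]; case: (G_nonneg e eG).
split.
- by rewrite filter_uniq // allpairs_uniq ?undup_uniq // => -[? ?] [? ?].
- have [e0 e0G] : exists e0, e0 \in G.
    by case: G G_neq0 => // e0 ? _; exists e0; rewrite mem_head.
  have [y yS lam_gt0] := exists_pos_coefficient e0G.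
  by move=> G'0; have := refined_edge e0G yS lam_gt0; rewrite G'0.
- move=> p; rewrite mem_refined_network => /andP[_ /hasP[e eG /andP[/eqP <- lam_gt0]]].
  by apply: contraTneq lam_gt0 => <-; have [_ -> _] := lamP eG; rewrite ltxx.
- move=> p; rewrite mem_refined_network => /andP[yS /hasP[e eG /andP[/eqP <- _]]].
  by split; apply: sources_nonneg; rewrite ?src_in_sources.
Qed.

Lemma refined_source_only : source_only refined_network.
Proof.
move=> p; rewrite mem_refined_network => /andP[+ _].
rewrite mem_undup => /mapP[e eG ->]; have [y yS lam_gt0] := exists_pos_coefficient eG.
by exists (src e, y); first exact: refined_edge.
Qed.

Lemma nodes_refined_network y : (y \in nodes refined_network) = (y \in sources G).
Proof.
apply/idP/idP => [|/mapP[e eG ->]].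
  rewrite mem_cat => /orP[] /mapP[p]; rewrite mem_refined_network.
    by case/andP=> _ /hasP[e eG /andP[/eqP <- _]] ->; exact: map_f.
  by case/andP=> yS _ ->; rewrite -mem_undup.
have [y' y'S lam_gt0] := exists_pos_coefficient eG.
by rewrite mem_cat (map_f (@src R d) (refined_edge eG y'S lam_gt0)).
Qed.

End Refinement.

Lemma effectively_source_only_of_realization (R : realType) (d : nat)
    (G G' : network R d) :
  is_network G' -> source_only G' -> realized_by G G' -> effectively_source_only G.
Proof.
move=> G'net G'so G_G' k k_gt0; have [k' [? ?]] := G_G' k k_gt0.
by exists G', k'.
Qed.

Theorem lemma4 (R : realType) (d : nat) (G : network R d) :
  is_network G -> endotactic G ->
  (exists G' : network R d,
      [/\ is_network G', source_only G', realized_by G G' &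
          forall y : vec R d, (y \in nodes G') = (y \in sources G)])
  /\ effectively_source_only G.
Proof.
move=> Gnet endo; have [lam lamP] := endotactic_cone_coefficients endo.
have G'net := refined_is_network lamP Gnet.
have G'so := refined_source_only lamP Gnet.
have G_G' := realized_by_refined_network lamP.
split; first by exists (refined_network G lam); split=> // y; exact: nodes_refined_network.
exact: effectively_source_only_of_realization G'net G'so G_G'.
Qed.
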